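(* Let $p>1$, let $k\ge 2$ be an integer and define \[\psi_k(x)=\sin^p(\pi x)\Big(\frac1{(k-x)^p}+\frac1{(k+x-1)^p}\Big),\qquad x\in[1/2,1].\] If $x\in(1/2,1)$ and $\psi_k'(x)<0$, then $\psi_{k+1}'(x)<0$. *)

From Stdlib Require Import Reals.
From Coquelicot Require Import Coquelicot.
Open Scope R_scope.

(* psi_k(x) = sin^p(pi x) * (1/(k-x)^p + 1/(k+x-1)^p), real exponent p via Rpower
   (all bases are positive for x in (1/2,1), k >= 2). *)
Definition psi (p : R) (k : nat) (x : R) : R :=
  Rpower (sin (PI * x)) p *
  (/ Rpower (INR k - x) p + / Rpower (INR k + x - 1) p).

(* Write [s = sin(pi x)], [a = k - x], [b = k + x - 1] and [c = pi cos(pi x)].  Up to the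
   positive factor [p s^(p-1)], [psi_k'(x)] is [c (a^-p + b^-p) + s (a^-(p+1) - b^-(p+1))],
   and passing from [k] to [k+1] shifts [a] and [b] by one.  The sign claim therefore
   reduces to the monotonicity of the ratio
   [(a^-(p+1) - b^-(p+1)) / (a^-p + b^-p)] under the shift [(a, b) -> (a+1, b+1)]. *)

From Stdlib Require Import Reals Lra Lia.
From Coquelicot Require Import Coquelicot.
Open Scope R_scope.

Lemma is_derive_Rpower (q y : R) :
  0 < y -> is_derive (fun z => Rpower z q) y (q * Rpower y (q - 1)).
Proof. intro Hy; now apply is_derive_Reals, derivable_pt_lim_power. Qed.

Lemma Derive_Rpower (q y : R) : 0 < y -> Derive (fun z => Rpower z q) y = q * Rpower y (q - 1).
Proof. intro Hy; now apply is_derive_unique, is_derive_Rpower. Qed.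

Lemma Rpower_pos (y q : R) : 0 < Rpower y q.
Proof. apply exp_pos. Qed.

Lemma Rpower_pred (y q : R) : 0 < y -> Rpower y q = y * Rpower y (q - 1).
Proof.
intro Hy; rewrite <- (Rpower_1 y) at 2 by exact Hy.
rewrite <- Rpower_plus; f_equal; ring.
Qed.

Lemma Rpower_opp_lt (q y z : R) : 0 < q -> 0 < y < z -> Rpower z (- q) < Rpower y (- q).
Proof.
intros Hq Hyz; rewrite !Rpower_Ropp.
apply Rinv_lt_contravar; [apply Rmult_lt_0_compat; apply Rpower_pos|].
apply Rlt_Rpower_l; lra.
Qed.

Lemma is_derive_psi (p : R) (k : nat) (x : R) : (1 <= k)%nat -> 0 < x < 1 ->
  is_derive (psi p k) x
    (p * Rpower (sin (PI * x)) (p - 1) *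
     (PI * cos (PI * x) * (Rpower (INR k - x) (- p) + Rpower (INR k + x - 1) (- p))
      + sin (PI * x) * (Rpower (INR k - x) (- (p + 1)) - Rpower (INR k + x - 1) (- (p + 1))))).
Proof.
intros Hk Hx.
assert (Hk1 : 1 <= INR k) by now apply (le_INR 1).
assert (Hs : 0 < sin (PI * x)) by (apply sin_gt_0; pose proof PI_RGT_0; nra).
apply (is_derive_ext (fun t => Rpower (sin (PI * t)) p *
         (Rpower (INR k - t) (- p) + Rpower (INR k + t - 1) (- p)))).
{ intro t; unfold psi; now rewrite !Rpower_Ropp. }
auto_derive.
- repeat split; eexists; apply is_derive_Rpower; lra.
- rewrite !Derive_Rpower, (Rpower_pred (sin (PI * x)) p) by lra.
  replace (- p - 1) with (- (p + 1)) by ring.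
  replace (INR k + - x) with (INR k - x) by ring.
  replace (INR k + x + - (1)) with (INR k + x - 1) by ring.
  ring.
Qed.

Lemma Derive_psi_lt0_iff (p : R) (k : nat) (x : R) : 0 < p -> (1 <= k)%nat -> 0 < x < 1 ->
  Derive (psi p k) x < 0 <->
  PI * cos (PI * x) * (Rpower (INR k - x) (- p) + Rpower (INR k + x - 1) (- p))
  + sin (PI * x) * (Rpower (INR k - x) (- (p + 1)) - Rpower (INR k + x - 1) (- (p + 1))) < 0.
Proof.
intros Hp Hk Hx.
rewrite (is_derive_unique _ _ _ (is_derive_psi p k x Hk Hx)).
assert (Hc : 0 < p * Rpower (sin (PI * x)) (p - 1)).
{ apply Rmult_lt_0_compat; [exact Hp | apply Rpower_pos]. }
split; intro H.
- apply (Rmult_lt_reg_l _ _ _ Hc); lra.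
- rewrite <- (Rmult_0_r (p * Rpower (sin (PI * x)) (p - 1))).
  now apply Rmult_lt_compat_l.
Qed.

Lemma power_ratio_shift_le (q a b : R) : 0 < q + 1 -> 0 < a < b ->
  (Rpower (a + 1) (- (q + 1)) - Rpower (b + 1) (- (q + 1))) * (Rpower a (- q) + Rpower b (- q))
  <= (Rpower a (- (q + 1)) - Rpower b (- (q + 1))) * (Rpower (a + 1) (- q) + Rpower (b + 1) (- q)).
Proof.
intros Hq [Ha Hab].
rewrite (Rpower_pred a (- q)), (Rpower_pred b (- q)), (Rpower_pred (a + 1) (- q)),
  (Rpower_pred (b + 1) (- q)) by lra.
replace (- q - 1) with (- (q + 1)) by ring.
(* [a (b+1) < (a+1) b] compares the mixed products, [a < b] the pure ones. *)
assert (Hmixed : Rpower (a + 1) (- (q + 1)) * Rpower b (- (q + 1))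
                 < Rpower a (- (q + 1)) * Rpower (b + 1) (- (q + 1))).
{ rewrite !Rpower_mult_distr by lra. apply Rpower_opp_lt; nra. }
assert (Hpure : Rpower b (- (q + 1)) * Rpower (b + 1) (- (q + 1))
                < Rpower a (- (q + 1)) * Rpower (a + 1) (- (q + 1))).
{ apply Rmult_le_0_lt_compat; try (left; apply Rpower_pos); apply Rpower_opp_lt; lra. }
set (al := Rpower a (- (q + 1))) in *; set (be := Rpower b (- (q + 1))) in *.
set (al' := Rpower (a + 1) (- (q + 1))) in *; set (be' := Rpower (b + 1) (- (q + 1))) in *.
assert (Hsum : 0 < a + b + 1) by lra.
assert (Hcross : 0 < (a + b + 1) * (al * be' - al' * be)) by (apply Rmult_lt_0_compat; lra).
apply Rminus_le.
replace ((al' - be') * (a * al + b * be) - (al - be) * ((a + 1) * al' + (b + 1) * be'))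
  with (- (al * al' - be * be' + (a + b + 1) * (al * be' - al' * be))) by ring.
lra.
Qed.

Theorem lemma2 (p : R) (k : nat) (x : R) :
  1 < p -> (2 <= k)%nat -> 1/2 < x < 1 ->
  Derive (psi p k) x < 0 -> Derive (psi p (S k)) x < 0.
Proof.
intros Hp Hk Hx HD.
rewrite Derive_psi_lt0_iff in HD |- * by (lia || lra).
rewrite S_INR.
replace (INR k + 1 - x) with ((INR k - x) + 1) by ring.
replace (INR k + 1 + x - 1) with ((INR k + x - 1) + 1) by ring.
assert (Hk2 : 2 <= INR k) by now apply (le_INR 2).
assert (Hs : 0 < sin (PI * x)) by (apply sin_gt_0; pose proof PI_RGT_0; nra).
pose proof (power_ratio_shift_le p (INR k - x) (INR k + x - 1)) as Hratio.
set (a := INR k - x) in *; set (b := INR k + x - 1) in *.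
assert (HQ : 0 < Rpower a (- p) + Rpower b (- p)).
{ apply Rplus_lt_0_compat; apply Rpower_pos. }
assert (HQ' : 0 < Rpower (a + 1) (- p) + Rpower (b + 1) (- p)).
{ apply Rplus_lt_0_compat; apply Rpower_pos. }
specialize (Hratio ltac:(lra) ltac:(unfold a, b; lra)).
(* No sign of [cos] is needed: scale the hypothesis by the new mass and the goal by the old. *)
nra.
Qed.
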